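(* Let $k,l\ge1$ be integers. For all finitely encoded one-parameter persistence modules $M,N$ over $\mathbb R$, \[ \mathrm{d}_{\mathrm T_l}(M,N)\le\max\{1,\tfrac lk\}\,\mathrm{d}_{\mathrm T_k}(M,N). \]
   Context: Finitely encoded persistence modules over $\mathbb R$ form an abelian category and each is isomorphic to a finite direct sum of interval modules over intervals of $\mathbb R$ (possibly unbounded, each end open or closed). For $k\ge1$, $\mathrm T_k(M)$ is the sum of the lengths of the $k$ longest intervals in the barcode of $M$ (all intervals if there are fewer than $k$); it is an amplitude (a function to $[0,\infty]$ vanishing on $0$, monotone under sub- and quotient objects and subadditive on short exact sequences). For an amplitude $\alpha$, the path metric $\mathrm{d}_\alpha(M,N)$ is the infimum, over zigzags $M\xleftarrow{\gamma_1}C_1\xrightarrow{\gamma_2}\cdots\xrightarrow{\gamma_n}N$ of finitely encoded modules, of $\sum_i\alpha(\ker\gamma_i)+\alpha(\operatorname{coker}\gamma_i)$ ($\inf\emptyset=\infty$). *)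

From HB Require Import structures.
From mathcomp Require Import all_boot all_order all_algebra.
From mathcomp Require Import all_classical all_reals all_analysis.
From mathcomp Require Import Rstruct.
Set Implicit Arguments. Unset Strict Implicit. Unset Printing Implicit Defensive.
Import Order.TTheory GRing.Theory Num.Theory.
Local Open Scope ring_scope.

Section PMod.
Variables (K : fieldType) (d : Order.disp_t) (P : porderType d).

Record pmod := PMod {
  pm_sp : P -> vectType K;
  pm_map : forall s t : P, (s <= t)%O -> {linear pm_sp s -> pm_sp t};
  pm_id : forall s (h : (s <= s)%O) x, pm_map h x = x;
  pm_comp : forall s t u (h1 : (s <= t)%O) (h2 : (t <= u)%O) (h3 : (s <= u)%O) x,
     pm_map h3 x = pm_map h2 (pm_map h1 x) }.

Record hom (M N : pmod) := Hom {
  hom_fun : forall t, {linear pm_sp M t -> pm_sp N t};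
  hom_nat : forall s t (h : (s <= t)%O) x,
     hom_fun t (pm_map M h x) = pm_map N h (hom_fun s x) }.

Definition is_kernel (X C M : pmod) (i : hom X C) (g : hom C M) : Prop :=
  forall t, injective (hom_fun i t) /\
    forall x, hom_fun g t x = 0 <-> exists y, hom_fun i t y = x.

Definition is_cokernel (C M Q : pmod) (p : hom M Q) (g : hom C M) : Prop :=
  forall t, (forall y, exists x, hom_fun p t x = y) /\
    forall y, hom_fun p t y = 0 <-> exists x, hom_fun g t x = y.
End PMod.

Section OneParam.
Variable K : fieldType.
Notation R := Rdefinitions.R.
Notation pmodR := (pmod K R).

(* Finitely encoded (Miller): there is a finite poset Q, a poset morphism
   pi : R -> Q and a Q-module H of finite-dimensional spaces with
   M isomorphic to the pullback pi^* H. *)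
Definition fin_enc (M : pmodR) : Prop :=
  exists (d' : Order.disp_t) (Q : finPOrderType d') (pi : R -> Q) (H : pmod K Q),
    {homo pi : x y / (x <= y)%O} /\
    exists phi : forall t, {linear pm_sp M t -> pm_sp H (pi t)},
      (forall t, bijective (phi t)) /\
      forall s t (h : (s <= t)%O) (hp : (pi s <= pi t)%O) x,
        phi t (pm_map M h x) = pm_map H hp (phi s x).

(* Barcodes: finite lists of nonempty intervals of R (mathcomp intervals:
   each end open/closed or infinite). *)
Definition itv_dflt : interval R := Interval -oo%O +oo%O.

(* M has barcode B, i.e. M is isomorphic to the direct sum of the interval
   modules k_I, I in B: unfolded as the images e t i of the standard basis
   vectors of the summands. *)
Definition has_barcode (M : pmodR) (B : seq (interval R)) : Prop :=
  (forall i, (i < size B)%N -> exists t : R, t \in nth itv_dflt B i) /\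
  exists e : forall t : R, nat -> pm_sp M t,
    (forall t : R, basis_of fullv
        [seq e t i | i <- iota 0 (size B) & t \in nth itv_dflt B i]) /\
    (forall (s t : R) (h : (s <= t)%O) i, (i < size B)%N ->
        s \in nth itv_dflt B i ->
        pm_map M h (e s i) = if t \in nth itv_dflt B i then e t i else 0).

Definition itv_len (I : interval R) : \bar R :=
  match I with
  | Interval (BSide _ a) (BSide _ b) => ((b - a)%:E)%E
  | _ => (+oo)%E
  end.

Definition Tbar (k : nat) (B : seq (interval R)) : \bar R :=
  (\sum_(x <- take k (sort (fun x y : \bar R => (y <= x)%E) (map itv_len B))) x)%E.

(* the barcode of M (chosen; unique up to order for finitely encoded M) *)
Definition barcode_of (M : pmodR) : seq (interval R) :=
  xget [::] [set B | has_barcode M B].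

Definition Tamp (k : nat) (M : pmodR) : \bar R := Tbar k (barcode_of M).

Definition mcost (alpha : pmodR -> \bar R) (C M : pmodR) (g : hom C M) : \bar R :=
  ereal_inf [set x | exists (X : pmodR) (i : hom X C) (Q : pmodR) (p : hom M Q),
     [/\ is_kernel i g, is_cokernel p g & x = (alpha X + alpha Q)%E]].

Inductive zigzag : pmodR -> pmodR -> Type :=
| zz_nil M : zigzag M M
| zz_cons M C X N : fin_enc C -> fin_enc X ->
    hom C M -> hom C X -> zigzag X N -> zigzag M N.

Fixpoint zz_cost (alpha : pmodR -> \bar R) (M N : pmodR) (z : zigzag M N) : \bar R :=
  match z with
  | zz_nil _ => 0%E
  | zz_cons M C X N _ _ g1 g2 z' =>
      (mcost alpha g1 + mcost alpha g2 + zz_cost alpha z')%E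
  end.

Definition dist (alpha : pmodR -> \bar R) (M N : pmodR) : \bar R :=
  ereal_inf [set x | exists z : zigzag M N, x = zz_cost alpha z].
End OneParam.

(* T_k(M) sums the k largest bar lengths, so it is a partial sum of a
   nonincreasing nonnegative sequence.  For such a sequence the averages of
   the first n terms decrease with n, whence T_l <= max(1, l/k) T_k pointwise.
   A pointwise inequality between amplitudes passes to the cost of every
   zigzag and then to the infimum defining the path metric. *)

From Pilot Require Import Defs.
From HB Require Import structures.
From mathcomp Require Import all_boot all_order all_algebra.
From mathcomp Require Import all_classical all_reals all_analysis.
From mathcomp Require Import Rstruct.
Import Order.TTheory GRing.Theory Num.Theory.
Local Open Scope ring_scope.
Local Open Scope ereal_scope.

Lemma ereal_inf_le_pscale (R : realType) (S T : set \bar R) (c : R) :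
  (0 < c)%R -> (forall y, T y -> exists2 x, S x & x <= c%:E * y) ->
  ereal_inf S <= c%:E * ereal_inf T.
Proof.
move=> c_gt0 dom; rewrite -ereal_inf_pZl //.
apply: le_ereal_inf_tmp => _ [y Ty <-].
have [x Sx le_xy] := dom y Ty.
exact: le_trans (ereal_inf_lbound Sx) le_xy.
Qed.

Lemma big_take_nth (R : realDomainType) (s : seq (\bar R)) n :
  \sum_(x <- take n s) x = \sum_(0 <= i < n) nth 0 s i.
Proof.
elim: s n => [|a s IHs] [|n] /=.
- by rewrite big_nil big_geq.
- by rewrite big_nil big1 // => i _; rewrite nth_nil.
- by rewrite big_nil big_geq.
- by rewrite big_cons big_nat_recl // IHs.
Qed.

Section PartialSums.
Variables (R : realFieldType) (s : seq (\bar R)).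
Hypothesis s_nonincr : sorted (fun x y : \bar R => y <= x) s.
Hypothesis s_ge0 : forall x, x \in s -> 0 <= x.

Local Notation psum n := (\sum_(0 <= i < n) nth 0 s i).

Lemma nth_ge0 i : 0 <= nth 0 s i.
Proof.
have [i_lt|i_ge] := ltnP i (size s); first by rewrite s_ge0 ?mem_nth.
by rewrite nth_default.
Qed.

Lemma nth_nonincr i j : (i <= j)%N -> nth 0 s j <= nth 0 s i.
Proof.
move=> le_ij; have [j_lt|j_ge] := ltnP j (size s); last first.
  by rewrite nth_default ?nth_ge0.
apply: (sorted_leq_nth (rev_trans le_trans) lexx 0 s_nonincr) => //.
by rewrite inE (leq_ltn_trans le_ij).
Qed.

Lemma psum_ge0 n : 0 <= psum n.
Proof. by apply: sume_ge0 => i _; apply: nth_ge0. Qed.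

Lemma psum_mono m n : (m <= n)%N -> psum m <= psum n.
Proof.
move=> le_mn; rewrite (big_cat_nat (leq0n m) le_mn) /=.
by rewrite leeDl // sume_ge0 // => i _; apply: nth_ge0.
Qed.

Lemma mul_nth_le_psum m n : (m <= n)%N -> m%:R%:E * nth 0 s n <= psum m.
Proof.
elim: m => [|m IHm] lt_mn; first by rewrite mul0e big_geq.
rewrite big_nat_recr //= -addn1 natrD EFinD ge0_muleDl ?nth_ge0 // mul1e.
by rewrite leeD ?IHm ?nth_nonincr // ltnW.
Qed.

Lemma psum_mean_nonincr k n : (k <= n)%N -> k%:R%:E * psum n <= n%:R%:E * psum k.
Proof.
elim: n => [|n IHn]; first by rewrite leqn0 => /eqP ->.
rewrite leq_eqVlt ltnS => /predU1P[-> //|le_kn].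
rewrite big_nat_recr //= ge0_muleDr ?psum_ge0 ?nth_ge0 //.
rewrite -addn1 natrD EFinD ge0_muleDl ?psum_ge0 // mul1e.
by rewrite leeD ?IHn ?mul_nth_le_psum.
Qed.

Lemma psum_le_max_ratio k l : (0 < k)%N ->
  psum l <= (Num.max 1 (l%:R / k%:R))%:E * psum k.
Proof.
move=> k_gt0; have k_pos : (0 < k%:R :> R)%R by rewrite ltr0n.
have [le_lk|lt_kl] := leqP l k.
  apply: le_trans (psum_mono _ _ le_lk) _.
  by rewrite lee_pemull ?psum_ge0 // lee_fin le_max lexx.
apply: (@le_trans _ _ ((l%:R / k%:R)%:E * psum k)); last first.
  by apply: lee_wpmul2r; rewrite ?psum_ge0 // lee_fin le_max lexx orbT.
have -> : psum l = k%:R^-1%:E * (k%:R%:E * psum l).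
  by rewrite muleA -EFinM mulVf ?mul1e // lt0r_neq0.
rewrite mulrC EFinM -muleA; apply: lee_wpmul2l; first by rewrite lee_fin invr_ge0 ltW.
exact: psum_mean_nonincr (ltnW lt_kl).
Qed.

End PartialSums.

Notation R := Rdefinitions.R.

Lemma itv_len_ge0 (I : interval R) : (exists t : R, t \in I) -> 0 <= itv_len I.
Proof.
case: I => [[b1 a|[]] [b2 b|[]]] [t] //=.
rewrite in_itv /= => /andP[lt_at lt_tb].
by rewrite lee_fin subr_ge0 (le_trans (lteifW lt_at) (lteifW lt_tb)).
Qed.

Lemma barcode_of_len_ge0 (K : fieldType) (M : pmod K R) x :
  x \in map itv_len (barcode_of M) -> 0 <= x.
Proof.
rewrite /barcode_of; case: xgetP => [B _ [B_nonempty _]|_] //.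
move=> /mapP[I IB ->]; apply: itv_len_ge0.
by have := B_nonempty (index I B); rewrite index_mem nth_index //; apply.
Qed.

Section Tamp.
Variables (K : fieldType) (M : pmod K R).

Let lengths := sort (fun x y : \bar R => y <= x) (map itv_len (barcode_of M)).

Let lengths_nonincr : sorted (fun x y : \bar R => y <= x) lengths.
Proof. by apply: sort_sorted => x y; apply: le_total. Qed.

Let lengths_ge0 x : x \in lengths -> 0 <= x.
Proof. by rewrite mem_sort; apply: barcode_of_len_ge0. Qed.

Lemma Tamp_ge0 k : 0 <= Tamp k M.
Proof. by rewrite /Tamp /Tbar big_take_nth psum_ge0. Qed.

Lemma Tamp_le_max_ratio k l : (0 < k)%N ->
  Tamp l M <= (Num.max 1 (l%:R / k%:R : R))%:E * Tamp k M.
Proof. by move=> k_gt0; rewrite /Tamp /Tbar !big_take_nth psum_le_max_ratio. Qed.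

End Tamp.

Section DistScale.
Variables (K : fieldType) (alpha beta : pmod K R -> \bar R) (c : R).
Hypothesis c_gt0 : (0 < c)%R.
Hypothesis beta_ge0 : forall M, 0 <= beta M.
Hypothesis alpha_le : forall M, alpha M <= c%:E * beta M.

Lemma mcost_ge0 (C M : pmod K R) (g : Defs.hom C M) : 0 <= mcost beta g.
Proof. by apply: le_ereal_inf_tmp => _ [X [i [Q [p [_ _ ->]]]]]; rewrite adde_ge0. Qed.

Lemma zz_cost_ge0 (M N : pmod K R) (z : zigzag M N) : 0 <= zz_cost beta z.
Proof. by elim: z => //= *; rewrite !adde_ge0 ?mcost_ge0. Qed.

Lemma mcost_le_scale (C M : pmod K R) (g : Defs.hom C M) :
  mcost alpha g <= c%:E * mcost beta g.
Proof.
apply: ereal_inf_le_pscale => // _ [X [i [Q [p [ker_i coker_p ->]]]]].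
exists (alpha X + alpha Q); first by exists X, i, Q, p.
by rewrite ge0_muleDr // leeD.
Qed.

Lemma zz_cost_le_scale (M N : pmod K R) (z : zigzag M N) :
  zz_cost alpha z <= c%:E * zz_cost beta z.
Proof.
elim: z => [|M' C X N' _ _ g1 g2 z IHz] /=; first by rewrite mule0.
rewrite !ge0_muleDr ?adde_ge0 ?mcost_ge0 ?zz_cost_ge0 //.
by rewrite !leeD ?mcost_le_scale.
Qed.

Lemma dist_le_scale (M N : pmod K R) : dist alpha M N <= c%:E * dist beta M N.
Proof.
apply: ereal_inf_le_pscale => // _ [z ->].
by exists (zz_cost alpha z); [exists z | apply: zz_cost_le_scale].
Qed.

End DistScale.

Local Close Scope ereal_scope.

Theorem mainTheorem14 (K : fieldType) (k l : nat) :
  (0 < k)%N -> (0 < l)%N ->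
  forall M N : pmod K Rdefinitions.R, fin_enc M -> fin_enc N ->
  (dist (@Tamp K l) M N <=
     (Num.max 1 (l%:R / k%:R : Rdefinitions.R))%:E * dist (@Tamp K k) M N)%E.
Proof.
move=> k_gt0 _ M N _ _.
apply: dist_le_scale => [|M'|M']; last exact: Tamp_le_max_ratio.
- by rewrite lt_max ltr01.
- exact: Tamp_ge0.
Qed.
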